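(* In the $\mathbf N$-agent system described in the context, let $\{\boldsymbol\mu_t^{\mathbf N},\boldsymbol\nu_t^{\mathbf N}\}_{t\ge0}$ be the empirical joint state and action distributions induced by a policy $\boldsymbol\pi=\{\boldsymbol\pi_t\}_{t\ge0}$. Then for every $t\ge0$, $$\mathbb E\Big|\frac1{N_{\mathrm{pop}}}\sum_{k\in[K]}\sum_{j=1}^{N_k}r_k(x_{j,k}^t,u_{j,k}^t,\boldsymbol\mu_t^{\mathbf N},\boldsymbol\nu_t^{\mathbf N})-\sum_{k\in[K]}r_k^{\mathrm{MF}}(\boldsymbol\mu_t^{\mathbf N},\boldsymbol\pi_t)\Big|\le C_R\sqrt{|\mathcal U|}\frac1{N_{\mathrm{pop}}}\Big(\sum_{k\in[K]}\sqrt{N_k}\Big),$$ where $C_R=M_R+L_R$.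
   Context: Fix $K\ge1$, $N_1,\dots,N_K\ge1$, $[K]=\{1,\dots,K\}$, $N_{\mathrm{pop}}=\sum_kN_k$, finite sets $\mathcal X,\mathcal U$, $\mathcal P(A)$ the probability distributions on $A$, $|\cdot|_1$ the $L_1$ norm, constants $M_R,L_R,L_P>0$. Agent $j\in[N_k]$ of class $k$ has state $x_{j,k}^t$ and action $u_{j,k}^t$; $\boldsymbol\mu_t^{\mathbf N}(x,k)=\frac1{N_{\mathrm{pop}}}\sum_{j=1}^{N_k}\mathbf 1(x_{j,k}^t=x)$, $\boldsymbol\nu_t^{\mathbf N}(u,k)=\frac1{N_{\mathrm{pop}}}\sum_{j=1}^{N_k}\mathbf 1(u_{j,k}^t=u)$. For each $k$, $r_k:\mathcal X\times\mathcal U\times\mathcal P(\mathcal X\times[K])\times\mathcal P(\mathcal U\times[K])\to\mathbb R$ and $P_k:\mathcal X\times\mathcal U\times\mathcal P(\mathcal X\times[K])\times\mathcal P(\mathcal U\times[K])\to\mathcal P(\mathcal X)$ satisfy $|r_k|\le M_R$, $|r_k(x,u,\boldsymbol\mu_1,\boldsymbol\nu_1)-r_k(x,u,\boldsymbol\mu_2,\boldsymbol\nu_2)|\le L_R(|\boldsymbol\mu_1-\boldsymbol\mu_2|_1+|\boldsymbol\nu_1-\boldsymbol\nu_2|_1)$, $|P_k(x,u,\boldsymbol\mu_1,\boldsymbol\nu_1)-P_k(x,u,\boldsymbol\mu_2,\boldsymbol\nu_2)|_1\le L_P(|\boldsymbol\mu_1-\boldsymbol\mu_2|_1+|\boldsymbol\nu_1-\boldsymbol\nu_2|_1)$.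 A policy is $\boldsymbol\pi=\{\boldsymbol\pi_t\}_{t\ge0}$, $\boldsymbol\pi_t=(\pi_k^t)_k$, $\pi_k^t:\mathcal X\times\mathcal P(\mathcal X\times[K])\to\mathcal P(\mathcal U)$. Dynamics: conditioned on all states at time $t$, actions are independent across agents with $u_{j,k}^t\sim\pi_k^t(x_{j,k}^t,\boldsymbol\mu_t^{\mathbf N})$; conditioned on states and actions, next states are independent with $x_{j,k}^{t+1}\sim P_k(x_{j,k}^t,u_{j,k}^t,\boldsymbol\mu_t^{\mathbf N},\boldsymbol\nu_t^{\mathbf N})$. Mean-field: $\nu^{\mathrm{MF}}(\boldsymbol\mu,\boldsymbol\pi)(u,k)=\sum_x\pi_k(x,\boldsymbol\mu)(u)\boldsymbol\mu(x,k)$, $r_k^{\mathrm{MF}}(\boldsymbol\mu,\boldsymbol\pi)=\sum_{x,u}\boldsymbol\mu(x,k)\pi_k(x,\boldsymbol\mu)(u)r_k(x,u,\boldsymbol\mu,\nu^{\mathrm{MF}}(\boldsymbol\mu,\boldsymbol\pi))$. *)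

From mathcomp Require Import all_boot all_order all_algebra.
From mathcomp Require Import reals.
Set Implicit Arguments. Unset Strict Implicit. Unset Printing Implicit Defensive.
Import Order.TTheory GRing.Theory Num.Theory.
Local Open Scope ring_scope.

Definition is_pdist (R : realType) (T : finType) (f : {ffun T -> R}) : Prop :=
  (forall i, 0 <= f i) /\ \sum_i f i = 1.

Definition l1dist (R : realType) (T : finType) (f g : {ffun T -> R}) : R :=
  \sum_i `|f i - g i|.

Definition agent (K : nat) (N : 'I_K -> nat) : finType := {k : 'I_K & 'I_(N k)}.

Definition Npop (K : nat) (N : 'I_K -> nat) : nat := (\sum_(k < K) N k)%N.

Definition emp_mu (R : realType) (X : finType) (K : nat) (N : 'I_K -> nat)
  (xs : {ffun agent N -> X}) : {ffun X * 'I_K -> R} :=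
  [ffun p => (\sum_(a : agent N | (tag a == p.2) && (xs a == p.1)) 1)
             / (Npop N)%:R].

Definition emp_nu (R : realType) (U : finType) (K : nat) (N : 'I_K -> nat)
  (us : {ffun agent N -> U}) : {ffun U * 'I_K -> R} :=
  [ffun p => (\sum_(a : agent N | (tag a == p.2) && (us a == p.1)) 1)
             / (Npop N)%:R].

Definition nuMF (R : realType) (X U : finType) (K : nat)
  (pit : 'I_K -> X -> {ffun X * 'I_K -> R} -> {ffun U -> R})
  (mu : {ffun X * 'I_K -> R}) : {ffun U * 'I_K -> R} :=
  [ffun p => \sum_x pit p.2 x mu p.1 * mu (x, p.2)].

Definition rMF (R : realType) (X U : finType) (K : nat)
  (r : 'I_K -> X -> U -> {ffun X * 'I_K -> R} -> {ffun U * 'I_K -> R} -> R)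
  (pit : 'I_K -> X -> {ffun X * 'I_K -> R} -> {ffun U -> R})
  (mu : {ffun X * 'I_K -> R}) (k : 'I_K) : R :=
  \sum_x \sum_u mu (x, k) * pit k x mu u * r k x u mu (nuMF pit mu).

Definition act_prob (R : realType) (X U : finType) (K : nat) (N : 'I_K -> nat)
  (pit : 'I_K -> X -> {ffun X * 'I_K -> R} -> {ffun U -> R})
  (xs : {ffun agent N -> X}) (us : {ffun agent N -> U}) : R :=
  \prod_(a : agent N) pit (tag a) (xs a) (emp_mu R xs) (us a).

Definition trans_prob (R : realType) (X U : finType) (K : nat) (N : 'I_K -> nat)
  (P : 'I_K -> X -> U -> {ffun X * 'I_K -> R} -> {ffun U * 'I_K -> R} -> {ffun X -> R})
  (xs : {ffun agent N -> X}) (us : {ffun agent N -> U}) (xs' : {ffun agent N -> X}) : R :=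
  \prod_(a : agent N) P (tag a) (xs a) (us a) (emp_mu R xs) (emp_nu R us) (xs' a).

Fixpoint state_law (R : realType) (X U : finType) (K : nat) (N : 'I_K -> nat)
  (P : 'I_K -> X -> U -> {ffun X * 'I_K -> R} -> {ffun U * 'I_K -> R} -> {ffun X -> R})
  (pi : nat -> 'I_K -> X -> {ffun X * 'I_K -> R} -> {ffun U -> R})
  (init : {ffun {ffun agent N -> X} -> R}) (t : nat) : {ffun {ffun agent N -> X} -> R} :=
  match t with
  | 0 => init
  | t'.+1 =>
      let L := state_law P pi init t' in
      [ffun xs' => \sum_(xs : {ffun agent N -> X}) \sum_(us : {ffun agent N -> U})
          L xs * act_prob (pi t') xs us * trans_prob P xs us xs']
  end.

Definition expect_t (R : realType) (X U : finType) (K : nat) (N : 'I_K -> nat)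
  (P : 'I_K -> X -> U -> {ffun X * 'I_K -> R} -> {ffun U * 'I_K -> R} -> {ffun X -> R})
  (pi : nat -> 'I_K -> X -> {ffun X * 'I_K -> R} -> {ffun U -> R})
  (init : {ffun {ffun agent N -> X} -> R}) (t : nat)
  (F : {ffun agent N -> X} -> {ffun agent N -> U} -> R) : R :=
  \sum_(xs : {ffun agent N -> X}) \sum_(us : {ffun agent N -> U})
     state_law P pi init t xs * act_prob (pi t) xs us * F xs us.

(* Conditionally on the state profile at time t the actions are independent, agent a drawing
   from p_a := pi_t(x_a, mu), so it suffices to bound the conditional expectation for a fixed
   state profile.  With nu := nu^MF(mu, pi_t) and n := N_pop, the gap is
     n^-1 sum_a [r_a(u_a, nu^N) - r_a(u_a, nu)] + n^-1 sum_a h_a(u_a),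
   where h_a := r_a(., nu) minus its p_a-mean.  The first term is at most L_R |nu^N - nu|_1.
   Each entry nu^N(u,k) - nu(u,k) is n^-1 times a sum of independent centred indicators, so by
   Cauchy-Schwarz its expected absolute value is at most n^-1 sqrt(sum_(a in class k) p_a(u)),
   and sum_u of these square roots is at most sqrt|U| sqrt(N_k).  The second term is n^-1 times
   a sum of n independent centred variables bounded by M_R, of expected absolute value at most
   n^-1 M_R sqrt n <= M_R sqrt|U| n^-1 sum_k sqrt(N_k). *)

From mathcomp Require Import all_boot all_order all_algebra.
From mathcomp Require Import reals.
From mathcomp Require Import ring.
Import Order.TTheory GRing.Theory Num.Theory.
Set Implicit Arguments. Unset Strict Implicit. Unset Printing Implicit Defensive.
Local Open Scope ring_scope.

Section Moments.
Variables (R : realType) (V : finType) (p : V -> R).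
Hypothesis p_ge0 : forall v, 0 <= p v.
Hypothesis p_sum1 : \sum_v p v = 1.

Lemma sum_centered_eq0 (f : V -> R) :
  \sum_v p v * (f v - \sum_w p w * f w) = 0.
Proof.
under eq_bigr do rewrite mulrBr.
by rewrite sumrB -mulr_suml p_sum1 mul1r subrr.
Qed.

Lemma sum_centered_sqr (f : V -> R) :
  \sum_v p v * (f v - \sum_w p w * f w) ^+ 2
  = \sum_v p v * f v ^+ 2 - (\sum_v p v * f v) ^+ 2.
Proof.
set m := \sum_w p w * f w.
have expand v : p v * (f v - m) ^+ 2 = p v * f v ^+ 2 - (2 * m) * (p v * f v) + m ^+ 2 * p v.
  by ring.
under eq_bigr do rewrite expand.
rewrite !big_split /= sumrN -!mulr_sumr p_sum1 -/m; ring.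
Qed.

Lemma sqr_mean_le (f : V -> R) :
  (\sum_v p v * f v) ^+ 2 <= \sum_v p v * f v ^+ 2.
Proof.
rewrite -subr_ge0 -sum_centered_sqr.
by apply: sumr_ge0 => v _; rewrite mulr_ge0 ?sqr_ge0.
Qed.

Lemma mean_norm_le (f : V -> R) (B : R) :
  0 <= B -> \sum_v p v * f v ^+ 2 <= B ^+ 2 -> \sum_v p v * `|f v| <= B.
Proof.
move=> B_ge0 fB; rewrite -(ler_sqr (x := _)) ?nnegrE //; last first.
  by apply: sumr_ge0 => v _; rewrite mulr_ge0.
apply: le_trans (sqr_mean_le (fun v => `|f v|)) _.
have normK v : `|f v| ^+ 2 = f v ^+ 2 by rewrite real_normK ?num_real.
by under eq_bigr do rewrite normK.
Qed.

Lemma centered_sqr_le (f : V -> R) (M : R) :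
  (forall v, `|f v| <= M) -> \sum_v p v * (f v - \sum_w p w * f w) ^+ 2 <= M ^+ 2.
Proof.
move=> fM; rewrite sum_centered_sqr lerBlDr.
apply: le_trans (_ : M ^+ 2 <= _); last by rewrite lerDl sqr_ge0.
rewrite -[M ^+ 2]mul1r -p_sum1 mulr_suml; apply: ler_sum => v _.
rewrite ler_wpM2l // -real_normK ?num_real // ler_sqr ?nnegrE //.
exact: le_trans (normr_ge0 _) (fM v).
Qed.

Lemma sum_mul_indicator u : \sum_v p v * (v == u)%:R = p u.
Proof.
rewrite (bigD1 u) //= eqxx mulr1 big1 ?addr0 // => v /negbTE ->.
by rewrite mulr0.
Qed.

Lemma sum_centered_indicator_eq0 u : \sum_v p v * ((v == u)%:R - p u) = 0.
Proof. by rewrite -(sum_mul_indicator u) sum_centered_eq0. Qed.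

Lemma centered_indicator_sqr_le u :
  \sum_v p v * ((v == u)%:R - p u) ^+ 2 <= p u.
Proof.
rewrite -(sum_mul_indicator u) sum_centered_sqr.
have idem v : (v == u)%:R ^+ 2 = (v == u)%:R :> R by case: (v == u); rewrite ?expr1n ?expr0n.
under eq_bigr do rewrite idem.
by rewrite lerBlDr lerDl sqr_ge0.
Qed.

End Moments.

Section ProductLaw.
Variables (R : realType) (A V : finType) (p : A -> V -> R).
Hypothesis p_ge0 : forall a v, 0 <= p a v.
Hypothesis p_sum1 : forall a, \sum_v p a v = 1.

Lemma sum_prod_law_mul (f : A -> V -> R) :
  \sum_(vs : {ffun A -> V}) (\prod_a p a (vs a)) * \prod_a f a (vs a)
  = \prod_a \sum_v p a v * f a v.
Proof. by rewrite bigA_distr_bigA; apply: eq_bigr => vs _; rewrite -big_split. Qed.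

Lemma prod_law_sum1 : \sum_(vs : {ffun A -> V}) \prod_a p a (vs a) = 1.
Proof.
rewrite -(bigA_distr_bigA (fun a v => p a v)); exact: big1.
Qed.

Lemma sum_prod_law_cross (g : A -> V -> R) a b :
  \sum_(vs : {ffun A -> V}) (\prod_c p c (vs c)) * (g a (vs a) * g b (vs b))
  = \prod_c \sum_v p c v * ((if c == a then g c v else 1) * (if c == b then g c v else 1)).
Proof.
rewrite -sum_prod_law_mul; apply: eq_bigr => vs _.
by rewrite big_split /= -!big_mkcond /= !big_pred1_eq.
Qed.

Lemma sum_prod_law_sqr_sum (g : A -> V -> R) :
  (forall a, \sum_v p a v * g a v = 0) ->
  \sum_(vs : {ffun A -> V}) (\prod_a p a (vs a)) * (\sum_a g a (vs a)) ^+ 2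
  = \sum_a \sum_v p a v * g a v ^+ 2.
Proof.
move=> g_centered.
have expand (vs : {ffun A -> V}) :
    (\prod_c p c (vs c)) * (\sum_a g a (vs a)) ^+ 2
    = \sum_a \sum_b (\prod_c p c (vs c)) * (g a (vs a) * g b (vs b)).
  rewrite expr2 mulr_suml mulr_sumr; apply: eq_bigr => a _.
  by rewrite !mulr_sumr.
under eq_bigr do rewrite expand.
rewrite exchange_big; apply: eq_bigr => a _.
rewrite exchange_big (bigD1 a) //= [X in _ + X]big1 ?addr0 => [|b b_neq_a].
  rewrite sum_prod_law_cross (bigD1 a) //= eqxx [X in _ * X]big1 ?mulr1 => [|c c_neq_a].
    by apply: eq_bigr => v _; rewrite expr2.
  by rewrite (negbTE c_neq_a) -[RHS](p_sum1 c); apply: eq_bigr => v _; rewrite !mulr1.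
rewrite sum_prod_law_cross (bigD1 a) //= eqxx eq_sym (negbTE b_neq_a).
by under eq_bigr do rewrite mulr1; rewrite g_centered mul0r.
Qed.

Lemma sum_prod_law_norm_sum_le (g : A -> V -> R) (B : R) :
  (forall a, \sum_v p a v * g a v = 0) -> 0 <= B ->
  \sum_a \sum_v p a v * g a v ^+ 2 <= B ^+ 2 ->
  \sum_(vs : {ffun A -> V}) (\prod_a p a (vs a)) * `|\sum_a g a (vs a)| <= B.
Proof.
move=> g_centered B_ge0 gB; apply: mean_norm_le => //.
- by move=> vs; apply: prodr_ge0.
- exact: prod_law_sum1.
- by rewrite sum_prod_law_sqr_sum.
Qed.

End ProductLaw.

Section SqrtSums.
Variables (R : realType) (I : finType).

Lemma sqr_sum_le_card_sum_sqr (x : I -> R) :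
  (\sum_i x i) ^+ 2 <= #|I|%:R * \sum_i x i ^+ 2.
Proof.
have [I0 | I_gt0] := posnP #|I|.
  by rewrite I0 big1 ?expr0n ?mul0r // => i; move: (card0_eq I0 i); rewrite inE.
set c : R := #|I|%:R; have c_gt0 : 0 < c by rewrite ltr0n.
have w_ge0 (i : I) : 0 <= c^-1 by rewrite invr_ge0 ltW.
have w_sum1 : \sum_(i : I) c^-1 = 1 by rewrite sumr_const -mulr_natr mulVf ?gt_eqF.
have := sqr_mean_le w_ge0 w_sum1 x.
rewrite -!mulr_sumr exprMn expr2 -mulrA ler_pM2l ?invr_gt0 //.
by rewrite ler_pdivrMl.
Qed.

Variable s : I -> R.
Hypothesis s_ge0 : forall i, 0 <= s i.

Lemma sum_sqrt_le_sqrt_card :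
  \sum_i Num.sqrt (s i) <= Num.sqrt #|I|%:R * Num.sqrt (\sum_i s i).
Proof.
have S_ge0 : 0 <= \sum_i Num.sqrt (s i) by apply: sumr_ge0 => i _; exact: sqrtr_ge0.
rewrite -sqrtrM ?ler0n // -(ger0_norm S_ge0) -sqrtr_sqr ler_sqrt; last first.
  by rewrite mulr_ge0 ?ler0n ?sumr_ge0.
apply: le_trans (sqr_sum_le_card_sum_sqr _) _.
by under eq_bigr do rewrite sqr_sqrtr //.
Qed.

Lemma sum_le_sqr_sum_sqrt : \sum_i s i <= (\sum_i Num.sqrt (s i)) ^+ 2.
Proof.
rewrite expr2 mulr_suml; apply: ler_sum => i _.
rewrite -{1}(sqr_sqrtr (s_ge0 i)) expr2 ler_wpM2l ?sqrtr_ge0 //.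
rewrite (bigD1 i) //= lerDl sumr_ge0 // => j _; exact: sqrtr_ge0.
Qed.

End SqrtSums.

Section Agents.
Variables (R : realType) (K : nat) (N : 'I_K -> nat).

Lemma sum_agent_by_class (F : agent N -> R) :
  \sum_a F a = \sum_k \sum_(a : agent N | tag a == k) F a.
Proof. exact: partition_big. Qed.

Lemma sum_agent_class (k : 'I_K) (F : agent N -> R) :
  \sum_(a : agent N | tag a == k) F a = \sum_(j < N k) F (Tagged _ j).
Proof.
have := @sig_big_dep R 0 +%R _ (fun k => 'I_(N k)) (pred1 k) (fun _ _ => true)
  (fun i j => F (Tagged (fun k => 'I_(N k)) j)).
rewrite big_pred1_eq => ->.
by apply: eq_big => -[i j] //=; rewrite andbT.
Qed.

Lemma sum1_agent_class k : \sum_(a : agent N | tag a == k) (1 : R) = (N k)%:R.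
Proof. by rewrite sum_agent_class sumr_const card_ord. Qed.

Lemma sum1_agent : \sum_(a : agent N) (1 : R) = (Npop N)%:R.
Proof.
rewrite sum_agent_by_class /Npop natr_sum; apply: eq_bigr => k _.
exact: sum1_agent_class.
Qed.

Lemma sum_pair_by_class (Y : finType) (F : Y * 'I_K -> R) :
  \sum_(p : Y * 'I_K) F p = \sum_k \sum_y F (y, k).
Proof. by rewrite exchange_big pair_bigA; apply: eq_bigr => -[]. Qed.

Variable Y : finType.

Lemma emp_muE (ys : {ffun agent N -> Y}) y k :
  emp_mu R ys (y, k) = (Npop N)%:R^-1 * \sum_(a : agent N | tag a == k) (ys a == y)%:R.
Proof.
rewrite ffunE mulrC big_mkcondr; congr (_ * _).
by apply: eq_bigr => a _; case: (ys a == y).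
Qed.

Lemma sum_emp_mu_mul (ys : {ffun agent N -> Y}) k (F : Y -> R) :
  \sum_y emp_mu R ys (y, k) * F y
  = (Npop N)%:R^-1 * \sum_(a : agent N | tag a == k) F (ys a).
Proof.
under eq_bigr do rewrite emp_muE -mulrA mulr_suml.
rewrite -mulr_sumr exchange_big /=; congr (_ * _); apply: eq_bigr => a _.
by under eq_bigr do rewrite eq_sym mulrC; rewrite sum_mul_indicator.
Qed.

Hypothesis Npop_gt0 : (0 < Npop N)%N.

Lemma emp_mu_pdist (ys : {ffun agent N -> Y}) : is_pdist (emp_mu R ys).
Proof.
split=> [yk | ]; first by rewrite ffunE divr_ge0 ?sumr_ge0.
have n_neq0 : (Npop N)%:R != 0 :> R by rewrite pnatr_eq0 -lt0n.
rewrite sum_pair_by_class -(mulVf n_neq0) -[X in _ * X]sum1_agent sum_agent_by_class mulr_sumr.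
apply: eq_bigr => k _; have /= <- := sum_emp_mu_mul ys k (fun=> 1).
by apply: eq_bigr => y _; rewrite mulr1.
Qed.

Lemma emp_nu_pdist (ys : {ffun agent N -> Y}) : is_pdist (emp_nu R ys).
Proof. exact: emp_mu_pdist. Qed.

End Agents.

Section MeanField.
Variables (R : realType) (X U : finType) (K : nat) (N : 'I_K -> nat)
  (pit : 'I_K -> X -> {ffun X * 'I_K -> R} -> {ffun U -> R}).

Lemma nuMF_pdist mu :
  is_pdist mu -> (forall k x, is_pdist (pit k x mu)) -> is_pdist (nuMF pit mu).
Proof.
move=> [mu_ge0 mu_sum1] pit_pdist; split=> [[u k] | ].
  by rewrite ffunE sumr_ge0 // => x _; rewrite mulr_ge0 //; case: (pit_pdist k x).
rewrite !sum_pair_by_class -mu_sum1 sum_pair_by_class; apply: eq_bigr => k _.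
under eq_bigr do rewrite ffunE /=.
rewrite exchange_big; apply: eq_bigr => x _.
by rewrite -mulr_suml; case: (pit_pdist k x) => _ ->; rewrite mul1r.
Qed.

Variable xs : {ffun agent N -> X}.
Let mu := emp_mu R xs.

Lemma nuMF_emp_mu u k :
  nuMF pit mu (u, k)
  = (Npop N)%:R^-1 * \sum_(a : agent N | tag a == k) pit (tag a) (xs a) mu u.
Proof.
rewrite ffunE /=; under eq_bigr do rewrite mulrC.
rewrite (sum_emp_mu_mul xs k (fun x => pit k x mu u)); congr (_ * _).
by apply: eq_bigr => a /eqP ->.
Qed.

Lemma sum_rMF_emp_mu
    (r : 'I_K -> X -> U -> {ffun X * 'I_K -> R} -> {ffun U * 'I_K -> R} -> R) :
  \sum_k rMF r pit mu k
  = (Npop N)%:R^-1 * \sum_(a : agent N) \sum_u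
      pit (tag a) (xs a) mu u * r (tag a) (xs a) u mu (nuMF pit mu).
Proof.
rewrite sum_agent_by_class mulr_sumr; apply: eq_bigr => k _.
rewrite /rMF; under eq_bigr do under eq_bigr do rewrite -mulrA.
under eq_bigr do rewrite -mulr_sumr.
rewrite (sum_emp_mu_mul xs k (fun x => \sum_u pit k x mu u * r k x u mu (nuMF pit mu))).
by congr (_ * _); apply: eq_bigr => a /eqP ->.
Qed.

End MeanField.

Lemma state_law_pdist (R : realType) (X U : finType) (K : nat) (N : 'I_K -> nat)
  (P : 'I_K -> X -> U -> {ffun X * 'I_K -> R} -> {ffun U * 'I_K -> R} -> {ffun X -> R})
  (pi : nat -> 'I_K -> X -> {ffun X * 'I_K -> R} -> {ffun U -> R})
  (init : {ffun {ffun agent N -> X} -> R}) :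
  (0 < Npop N)%N ->
  (forall k x u mu nu, is_pdist mu -> is_pdist nu -> is_pdist (P k x u mu nu)) ->
  (forall t k x mu, is_pdist mu -> is_pdist (pi t k x mu)) ->
  is_pdist init -> forall t, is_pdist (state_law P pi init t).
Proof.
move=> Npop_gt0 P_pdist pi_pdist init_pdist; elim=> [//| t [law_ge0 law_sum1]] /=.
have act_pdist (xs : {ffun agent N -> X}) a : is_pdist (pi t (tag a) (xs a) (emp_mu R xs)).
  exact/pi_pdist/emp_mu_pdist.
have next_pdist (xs : {ffun agent N -> X}) (us : {ffun agent N -> U}) a :
    is_pdist (P (tag a) (xs a) (us a) (emp_mu R xs) (emp_nu R us)).
  by apply: P_pdist; [exact: emp_mu_pdist | exact: emp_nu_pdist].
split=> [xs' | ].
  rewrite ffunE; apply: sumr_ge0 => xs _; apply: sumr_ge0 => us _.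
  rewrite !mulr_ge0 //; apply: prodr_ge0 => a _.
    by case: (act_pdist xs a).
  by case: (next_pdist xs us a).
under eq_bigr do rewrite ffunE.
rewrite exchange_big -law_sum1; apply: eq_bigr => xs _.
rewrite exchange_big -[RHS]mulr1 -(prod_law_sum1 (fun a => (act_pdist xs a).2)).
rewrite mulr_sumr; apply: eq_bigr => us _.
by rewrite -mulr_sumr (prod_law_sum1 (fun a => (next_pdist xs us a).2)) mulr1.
Qed.

Section ConditionalBound.
Variables (R : realType) (X U : finType) (K : nat) (N : 'I_K -> nat) (M L : R)
  (r : 'I_K -> X -> U -> {ffun X * 'I_K -> R} -> {ffun U * 'I_K -> R} -> R)
  (pit : 'I_K -> X -> {ffun X * 'I_K -> R} -> {ffun U -> R}).
Hypothesis Npop_gt0 : (0 < Npop N)%N.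
Hypothesis M_ge0 : 0 <= M.
Hypothesis L_ge0 : 0 <= L.
Hypothesis r_bounded : forall k x u mu nu,
  is_pdist mu -> is_pdist nu -> `|r k x u mu nu| <= M.
Hypothesis r_lipschitz : forall k x u mu1 nu1 mu2 nu2,
  is_pdist mu1 -> is_pdist nu1 -> is_pdist mu2 -> is_pdist nu2 ->
  `|r k x u mu1 nu1 - r k x u mu2 nu2| <= L * (l1dist mu1 mu2 + l1dist nu1 nu2).
Hypothesis pit_pdist : forall k x mu, is_pdist mu -> is_pdist (pit k x mu).
Variable xs : {ffun agent N -> X}.

Let n : R := (Npop N)%:R.
Let S : R := \sum_k Num.sqrt (N k)%:R.
Let mu := emp_mu R xs.
Let nu := nuMF pit mu.
Let p (a : agent N) : {ffun U -> R} := pit (tag a) (xs a) mu.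
Let Q (us : {ffun agent N -> U}) : R := act_prob pit xs us.
Let h (a : agent N) (v : U) : R :=
  r (tag a) (xs a) v mu nu - \sum_u p a u * r (tag a) (xs a) u mu nu.

Let n_gt0 : 0 < n. Proof. by rewrite ltr0n. Qed.
Let n_inv_ge0 : 0 <= n^-1. Proof. by rewrite invr_ge0 ltW. Qed.
Let S_ge0 : 0 <= S. Proof. by apply: sumr_ge0 => k _; exact: sqrtr_ge0. Qed.
Let mu_pdist : is_pdist mu. Proof. exact: emp_mu_pdist. Qed.
Let nu_pdist : is_pdist nu. Proof. by apply: nuMF_pdist => // k x; apply: pit_pdist. Qed.
Let p_ge0 a u : 0 <= p a u. Proof. by case: (pit_pdist (tag a) (xs a) mu_pdist). Qed.
Let p_sum1 a : \sum_u p a u = 1. Proof. by case: (pit_pdist (tag a) (xs a) mu_pdist). Qed.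
Let Q_ge0 us : 0 <= Q us.
Proof. by rewrite /Q /act_prob; apply: prodr_ge0 => a _; exact: p_ge0. Qed.

Let sum_agent_const (c : R) : \sum_(a : agent N) c = c * n.
Proof. by rewrite /n -sum1_agent mulr_sumr; apply: eq_bigr => a _; rewrite mulr1. Qed.

(* Forced by the hypotheses: there is an agent, and [pit] gives it a probability vector on [U]. *)
Let card_U_ge1 : 1 <= #|U|%:R :> R.
Proof.
case: (pickP (@predT (agent N))) => [a _ | no_agent].
  case: (pickP (@predT U)) => [u _ | no_action].
    by rewrite ler1n; apply/card_gt0P; exists u.
  by have := p_sum1 a; rewrite big_pred0 // => /eqP; rewrite eq_sym oner_eq0.
have := sum1_agent R N; rewrite big_pred0 // => /eqP.
by rewrite eq_sym pnatr_eq0 eqn0Ngt Npop_gt0.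
Qed.

Lemma reward_gap_le (us : {ffun agent N -> U}) :
  `| n^-1 * \sum_(a : agent N) r (tag a) (xs a) (us a) mu (emp_nu R us)
      - \sum_k rMF r pit mu k |
  <= L * l1dist (emp_nu R us) nu + `| n^-1 * \sum_a h a (us a) |.
Proof.
set r_emp := fun a => r (tag a) (xs a) (us a) mu (emp_nu R us).
set r_mf := fun a => r (tag a) (xs a) (us a) mu nu.
have -> : n^-1 * \sum_a r_emp a - \sum_k rMF r pit mu k
    = n^-1 * \sum_a (r_emp a - r_mf a) + n^-1 * \sum_a h a (us a).
  rewrite sum_rMF_emp_mu -/mu -/nu -mulrBr -mulrDr -sumrB -big_split /=.
  by congr (_ * _); apply: eq_bigr => a _; rewrite /h /r_mf; ring.
apply: le_trans (ler_normD _ _) _; rewrite lerD2r normrM ger0_norm //.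
have l1dist_mu0 : l1dist mu mu = 0.
  by rewrite /l1dist big1 // => yk _; rewrite subrr normr0.
have -> : L * l1dist (emp_nu R us) nu = n^-1 * \sum_(a : agent N) L * l1dist (emp_nu R us) nu.
  by rewrite sum_agent_const mulrCA mulVf ?gt_eqF // mulr1.
apply: ler_wpM2l => //; apply: le_trans (ler_norm_sum _ _ _) _.
apply: ler_sum => a _; rewrite -[X in _ <= _ * X]add0r -l1dist_mu0.
by apply: r_lipschitz => //; exact: emp_nu_pdist.
Qed.

Lemma expect_emp_nu_dev_le u k :
  \sum_us Q us * `|emp_nu R us (u, k) - nu (u, k)|
  <= n^-1 * Num.sqrt (\sum_(a : agent N | tag a == k) p a u).
Proof.
pose g a v := if tag a == k then (v == u)%:R - p a u else 0.
have dev us : emp_nu R us (u, k) - nu (u, k) = n^-1 * \sum_a g a (us a).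
  rewrite -[emp_nu R us]/(emp_mu R us) emp_muE nuMF_emp_mu -/mu -/n.
  by rewrite -mulrBr -sumrB big_mkcond.
under eq_bigr do rewrite dev normrM ger0_norm // mulrCA.
rewrite -mulr_sumr; apply: ler_wpM2l => //.
apply: (sum_prod_law_norm_sum_le p_ge0 p_sum1).
- move=> a; rewrite /g; case: (tag a == k); first exact: sum_centered_indicator_eq0.
  by rewrite big1 // => v _; rewrite mulr0.
- exact: sqrtr_ge0.
rewrite sqr_sqrtr ?sumr_ge0 // [X in _ <= X]big_mkcond; apply: ler_sum => a _.
rewrite /g; case: (tag a == k); first exact: centered_indicator_sqr_le.
by rewrite big1 // => v _; rewrite expr0n mulr0.
Qed.

Lemma expect_l1dist_emp_nu_le :
  \sum_us Q us * l1dist (emp_nu R us) nu <= Num.sqrt #|U|%:R * n^-1 * S.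
Proof.
rewrite /l1dist; under eq_bigr do rewrite mulr_sumr.
rewrite exchange_big sum_pair_by_class /S mulr_sumr; apply: ler_sum => k _.
apply: le_trans (_ : \sum_u n^-1 * Num.sqrt (\sum_(a | tag a == k) p a u) <= _).
  by apply: ler_sum => u _; exact: expect_emp_nu_dev_le.
rewrite -mulr_sumr [Num.sqrt _ * n^-1]mulrC -mulrA; apply: ler_wpM2l => //.
have class_mass : \sum_u \sum_(a : agent N | tag a == k) p a u = (N k)%:R.
  by rewrite exchange_big -(sum1_agent_class R); apply: eq_bigr => a _.
rewrite -class_mass; apply: sum_sqrt_le_sqrt_card => u.
exact: sumr_ge0.
Qed.

Lemma expect_centered_reward_le :
  \sum_us Q us * `|n^-1 * \sum_a h a (us a)| <= M * Num.sqrt #|U|%:R * n^-1 * S.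
Proof.
under eq_bigr do rewrite normrM ger0_norm // mulrCA.
have -> : M * Num.sqrt #|U|%:R * n^-1 * S = n^-1 * (M * Num.sqrt #|U|%:R * S) by ring.
rewrite -mulr_sumr; apply: ler_wpM2l => //.
apply: (sum_prod_law_norm_sum_le p_ge0 p_sum1).
- by move=> a; apply: sum_centered_eq0.
- by rewrite !mulr_ge0 ?sqrtr_ge0.
apply: le_trans (_ : \sum_(a : agent N) M ^+ 2 <= _).
  apply: ler_sum => a _; apply: centered_sqr_le => // v.
  exact: r_bounded.
have n_le_S2 : n <= S ^+ 2.
  by rewrite /n /Npop natr_sum; apply: sum_le_sqr_sum_sqrt => k; exact: ler0n.
rewrite sum_agent_const !exprMn sqr_sqrtr ?ler0n // -mulrA ler_wpM2l ?sqr_ge0 //.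
by apply: le_trans n_le_S2 _; rewrite ler_peMl ?sqr_ge0.
Qed.

Lemma expect_reward_gap_le :
  \sum_us act_prob pit xs us *
    `| n^-1 * \sum_(a : agent N) r (tag a) (xs a) (us a) mu (emp_nu R us)
       - \sum_k rMF r pit mu k |
  <= (M + L) * Num.sqrt #|U|%:R * n^-1 * S.
Proof.
apply: le_trans (_ : \sum_us Q us *
    (L * l1dist (emp_nu R us) nu + `|n^-1 * \sum_a h a (us a)|) <= _).
  by apply: ler_sum => us _; apply: ler_wpM2l => //; exact: reward_gap_le.
under eq_bigr do rewrite mulrDr mulrCA.
rewrite big_split /= -mulr_sumr.
have -> : (M + L) * Num.sqrt #|U|%:R * n^-1 * S
    = L * (Num.sqrt #|U|%:R * n^-1 * S) + M * Num.sqrt #|U|%:R * n^-1 * S by ring.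
apply: lerD; last exact: expect_centered_reward_le.
by apply: ler_wpM2l => //; exact: expect_l1dist_emp_nu_le.
Qed.

End ConditionalBound.

Unset Implicit Arguments. Set Strict Implicit.

Theorem lemma7 (R : realType) (X U : finType) (K : nat) (N : 'I_K -> nat)
  (M_R L_R L_P : R)
  (r : 'I_K -> X -> U -> {ffun X * 'I_K -> R} -> {ffun U * 'I_K -> R} -> R)
  (P : 'I_K -> X -> U -> {ffun X * 'I_K -> R} -> {ffun U * 'I_K -> R} -> {ffun X -> R})
  (pi : nat -> 'I_K -> X -> {ffun X * 'I_K -> R} -> {ffun U -> R})
  (init : {ffun {ffun agent N -> X} -> R}) :
  (0 < K)%N ->
  (forall k, (0 < N k)%N) ->
  0 < M_R -> 0 < L_R -> 0 < L_P ->
  (forall k x u mu nu, is_pdist mu -> is_pdist nu -> `|r k x u mu nu| <= M_R) ->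
  (forall k x u mu1 nu1 mu2 nu2,
     is_pdist mu1 -> is_pdist nu1 -> is_pdist mu2 -> is_pdist nu2 ->
     `|r k x u mu1 nu1 - r k x u mu2 nu2| <= L_R * (l1dist mu1 mu2 + l1dist nu1 nu2)) ->
  (forall k x u mu nu, is_pdist mu -> is_pdist nu -> is_pdist (P k x u mu nu)) ->
  (forall k x u mu1 nu1 mu2 nu2,
     is_pdist mu1 -> is_pdist nu1 -> is_pdist mu2 -> is_pdist nu2 ->
     l1dist (P k x u mu1 nu1) (P k x u mu2 nu2) <= L_P * (l1dist mu1 mu2 + l1dist nu1 nu2)) ->
  (forall t k x mu, is_pdist mu -> is_pdist (pi t k x mu)) ->
  is_pdist init ->
  forall t : nat,
    expect_t P pi init t
      (fun xs us =>
         `| (Npop N)%:R^-1 * \sum_(a : agent N) r (tag a) (xs a) (us a) (emp_mu R xs) (emp_nu R us)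
            - \sum_(k < K) rMF r (pi t) (emp_mu R xs) k |)
    <= (M_R + L_R) * Num.sqrt (#|U|%:R) * (Npop N)%:R^-1 * \sum_(k < K) Num.sqrt ((N k)%:R).
Proof.
move=> K_gt0 N_gt0 M_R_gt0 L_R_gt0 _ r_bounded r_lipschitz P_pdist _ pi_pdist init_pdist t.
have Npop_gt0 : (0 < Npop N)%N.
  by rewrite /Npop (bigD1 (Ordinal K_gt0)) // ltn_addr ?N_gt0.
have [law_ge0 law_sum1] := state_law_pdist Npop_gt0 P_pdist pi_pdist init_pdist t.
set bound := (M_R + L_R) * _ * _ * _.
apply: le_trans (_ : \sum_xs state_law P pi init t xs * bound <= _); last first.
  by rewrite -mulr_suml law_sum1 mul1r.
apply: ler_sum => xs _; under eq_bigr do rewrite -mulrA.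
rewrite -mulr_sumr; apply: ler_wpM2l => //.
exact: expect_reward_gap_le Npop_gt0 (ltW M_R_gt0) (ltW L_R_gt0) r_bounded r_lipschitz
  (pi_pdist t) xs.
Qed.
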